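(* Let $1\le k\le d$ and $\alpha\ge1$. Let $P_1,\dots,P_m\subset\mathbb{R}^d$ be an arbitrary collection of finite point sets, and for each $i$ let $c(P_i)\subseteq P_i$ be an $\alpha$-approximate core-set for the $k$-directional height of $P_i$. Then $$\mathrm{MAXDET}_k\Big(\bigcup_{i=1}^m P_i\Big)\le \alpha^{2k}\cdot\mathrm{MAXDET}_k\Big(\bigcup_{i=1}^m c(P_i)\Big).$$
   Context: For a finite set $S\subset\mathbb{R}^d$ with $|S|=k$, let $M_S$ be the $k\times d$ matrix whose rows are the points of $S$. For finite $P\subset\mathbb{R}^d$, $\mathrm{MAXDET}_k(P)=\max_{S\subseteq P,\,|S|=k}\det(M_SM_S^\top)$. Let $\mathcal{H}_{k-1}$ be the set of all $(k-1)$-dimensional linear subspaces of $\mathbb{R}^d$, and $\mathrm{dist}(p,\mathcal{H})$ the Euclidean distance from point $p$ to subspace $\mathcal{H}$. The $k$-directional height of a point set $P$ with respect to $\mathcal{H}\in\mathcal{H}_{k-1}$ is $h(P,\mathcal{H})=\max_{p\in P}\mathrm{dist}(p,\mathcal{H})$. A subset $C\subseteq P$ is an $\alpha$-approximate core-set for the $k$-directional height of $P$ if $h(C,\mathcal{H})\ge h(P,\mathcal{H})/\alpha$ for every $\mathcal{H}\in\mathcal{H}_{k-1}$. *)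

From HB Require Import structures.
From mathcomp Require Import all_boot all_order all_algebra.
From mathcomp Require Import finmap.
From mathcomp Require Import reals.
Set Implicit Arguments. Unset Strict Implicit. Unset Printing Implicit Defensive.
Import Order.TTheory GRing.Theory Num.Theory.
Local Open Scope ring_scope.

Definition enorm {R : realType} {d : nat} (v : 'rV[R]_d) : R :=
  Num.sqrt (\sum_(j < d) (v 0 j) ^+ 2).

(* The linear subspace H of R^d is the row space of a d x d matrix Hm;
   its dimension is \rank Hm. *)
Definition dist_sub {R : realType} {d : nat} (p : 'rV[R]_d) (Hm : 'M[R]_d) : R :=
  inf (fun r : R => exists q : 'rV[R]_d, (q <= Hm)%MS /\ r = enorm (p - q)).

Definition height {R : realType} {d : nat} (P : {fset 'rV[R]_d}) (Hm : 'M[R]_d) : R :=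
  \big[Num.max/0]_(p : P) dist_sub (val p) Hm.

Definition coreset {R : realType} {d : nat} (alpha : R) (k : nat)
    (P C : {fset 'rV[R]_d}) : Prop :=
  (C `<=` P)%fset /\
  forall Hm : 'M[R]_d, \rank Hm = k.-1 -> height P Hm / alpha <= height C Hm.

Definition ptmx {R : realType} {d k : nat} (P : {fset 'rV[R]_d})
    (f : {ffun 'I_k -> P}) : 'M[R]_(k, d) :=
  \matrix_(i < k, j < d) (val (f i)) 0 j.

(* MAXDET_k(P): max over k-element subsets S of P (enumerated as injective
   k-tuples of points of P; det(M_S M_S^T) does not depend on the ordering)
   of det(M_S M_S^T); convention 0 if |P| < k. *)
Definition maxdet {R : realType} {d : nat} (k : nat) (P : {fset 'rV[R]_d}) : R :=
  \big[Num.max/0]_(f : {ffun 'I_k -> P} | injectiveb f)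
     \det (ptmx f *m (ptmx f)^T).

From HB Require Import structures.
From mathcomp Require Import all_boot all_order all_algebra.
From mathcomp Require Import finmap.
From mathcomp Require Import reals.
Set Implicit Arguments. Unset Strict Implicit. Unset Printing Implicit Defensive.
Import Order.TTheory GRing.Theory Num.Theory.
Local Open Scope ring_scope.

(* Fix a row p of a k-point configuration M and let A be the matrix of the
   other k-1 rows.  The Gram determinant det(M M^T) equals det(A A^T) times
   the squared distance from p to the row space H of A.  When the rows are
   independent, H is a (k-1)-dimensional subspace, so the core-set of a part
   containing p has a point q with dist(q, H) >= dist(p, H) / alpha, and
   replacing p by q loses at most a factor alpha^2.  Replacing the k rows one
   at a time moves a configuration of the union of the P_i into the union of
   the core-sets at a total cost of at most alpha^(2k). *)

Section RowFree.
Variable F : fieldType.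

Lemma row'_free m n (j : 'I_m.+1) (M : 'M[F]_(m.+1, n)) :
  row_free M -> row_free (row' j M).
Proof.
move=> freeM; apply: inj_row_free => v vM0.
have sub1K : row' j 1%:M *m (row' j 1%:M)^T = 1%:M :> 'M[F]_m.
  apply/matrixP => a b; rewrite tr_row' trmx1 mul_rowsub_mx mul1mx !mxE.
  by rewrite (inj_eq (@lift_inj _ j)).
have : (v *m row' j 1%:M) *m M = 0 *m M by rewrite -mulmxA -rowsubE vM0 mul0mx.
by move/(row_free_inj freeM) => v1; rewrite -[v]mulmx1 -sub1K mulmxA v1 mul0mx.
Qed.

Lemma row_free_row_inj m n (M : 'M[F]_(m, n)) :
  row_free M -> injective (fun i => row i M).
Proof.
move=> freeM a b; rewrite !rowE => /(row_free_inj freeM)/matrixP/(_ 0 a).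
by rewrite !mxE !eqxx /=; case: eqP => // _ /eqP; rewrite oner_eq0.
Qed.

End RowFree.

Section SetRow.
Variable R : comRingType.

Definition set_row m n (j : 'I_m) (v : 'rV[R]_n) (M : 'M[R]_(m, n)) : 'M[R]_(m, n) :=
  \matrix_(i, l) if i == j then v 0 l else M i l.

Lemma row'_set_row m n (j : 'I_m) v (M : 'M_(m, n)) :
  row' j (set_row j v M) = row' j M.
Proof. by apply/matrixP => a l; rewrite !mxE eq_sym (negbTE (neq_lift j a)). Qed.

Lemma row_set_row m n (j : 'I_m) v (M : 'M_(m, n)) i :
  row i (set_row j v M) = if i == j then v else row i M.
Proof. by apply/rowP => l; rewrite !mxE; case: eqP; rewrite ?mxE. Qed.

Lemma set_set_row m n (j : 'I_m) u v (M : 'M_(m, n)) :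
  set_row j u (set_row j v M) = set_row j u M.
Proof. by apply/matrixP => i l; rewrite !mxE; case: eqP. Qed.

Lemma set_row_id m n (j : 'I_m) (M : 'M_(m, n)) : set_row j (row j M) M = M.
Proof. by apply/matrixP => i l; rewrite !mxE; case: eqP => [->|]. Qed.

Lemma mul_set_row m n p (j : 'I_m) v (M : 'M_(m, n)) (N : 'M_(n, p)) :
  set_row j v M *m N = set_row j (v *m N) (M *m N).
Proof.
apply/matrixP => i l; rewrite !mxE.
by case: eqP => ij; apply: eq_bigr => a _; rewrite mxE; case: eqP.
Qed.

Lemma det_set_row_shear n (j : 'I_n.+1) (w : 'rV[R]_n) :
  \det (set_row j (delta_mx 0 j + w *m row' j 1%:M) 1%:M) = 1.
Proof.
set U := set_row _ _ _; rewrite (expand_det_col _ j) (bigD1 j) //= big1 => [|i ij].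
  rewrite addr0 /cofactor -signr_odd addnn odd_double expr0 mul1r.
  have -> : row' j (col' j U) = 1%:M.
    apply/matrixP => a b; rewrite !mxE eq_sym (negbTE (neq_lift j a)).
    by rewrite (inj_eq (@lift_inj _ j)).
  rewrite det1 mulr1 !mxE eqxx big1 ?addr0 // => a _.
  by rewrite !mxE eq_sym (negbTE (neq_lift j a)) mulr0.
by rewrite !mxE (negbTE ij) mul0r.
Qed.

End SetRow.

Section Gram.
Variables (R : realFieldType) (d : nat).
Implicit Types (u v p r : 'rV[R]_d).

Definition sqnorm v : R := (v *m v^T) 0 0.

Lemma sqnormE v : sqnorm v = \sum_(l < d) v 0 l ^+ 2.
Proof. by rewrite /sqnorm mxE; apply: eq_bigr => l _; rewrite mxE expr2. Qed.

Lemma sqnorm_ge0 v : 0 <= sqnorm v.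
Proof. by rewrite sqnormE; apply: sumr_ge0 => l _; apply: sqr_ge0. Qed.

Lemma sqnorm_eq0 v : (sqnorm v == 0) = (v == 0).
Proof.
apply/idP/eqP => [|->]; last by rewrite /sqnorm mul0mx mxE.
rewrite sqnormE => /eqP/psumr_eq0P v0; apply/rowP => l; apply/eqP.
by rewrite mxE -sqrf_eq0 v0 // => i _; apply: sqr_ge0.
Qed.

Lemma sqnormD_orth u v : u *m v^T = 0 -> sqnorm (u + v) = sqnorm u + sqnorm v.
Proof.
move=> uv0; have vu0 : v *m u^T = 0 by rewrite -[v]trmxK -trmx_mul uv0 trmx0.
by rewrite /sqnorm linearD /= mulmxDl !mulmxDr uv0 vu0 addr0 add0r mxE.
Qed.

Definition gram m (M : 'M[R]_(m, d)) := M *m M^T.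

Lemma row_free_gram m (M : 'M[R]_(m, d)) : \det (gram M) != 0 -> row_free M.
Proof.
rewrite -unitfE -unitmxE => /mxrank_unit rkG.
by rewrite /row_free eqn_leq rank_leq_row -{1}rkG mxrankM_maxl.
Qed.

Lemma gram_unit m (M : 'M[R]_(m, d)) : row_free M -> gram M \in unitmx.
Proof.
move=> freeM; rewrite -row_free_unit; apply: inj_row_free => v vG0.
apply/eqP; rewrite -(mulmx_free_eq0 _ freeM) -sqnorm_eq0 /sqnorm trmx_mul.
by rewrite mulmxA -(mulmxA v) vG0 mul0mx mxE.
Qed.

Section PerpProjection.
Variables (n : nat) (A : 'M[R]_(n, d)).

Definition perp_coef p := p *m A^T *m invmx (gram A).
Definition proj_perp p := p - perp_coef p *m A.

Hypothesis unitA : gram A \in unitmx.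

Lemma proj_perp_orth p : proj_perp p *m A^T = 0.
Proof. by rewrite /proj_perp mulmxBl -!mulmxA mulVmx // mulmx1 subrr. Qed.

Lemma sqnorm_proj_perp_min p (D : 'rV[R]_n) :
  sqnorm (proj_perp p) <= sqnorm (p - D *m A).
Proof.
have -> : p - D *m A = proj_perp p + (perp_coef p - D) *m A.
  by rewrite /proj_perp mulmxBl addrA subrK.
rewrite sqnormD_orth ?lerDl ?sqnorm_ge0 //.
by rewrite trmx_mul mulmxA proj_perp_orth mul0mx.
Qed.

End PerpProjection.

Lemma det_gram_set_row_orth n (j : 'I_n.+1) (M : 'M[R]_(n.+1, d)) r :
  r *m (row' j M)^T = 0 ->
  \det (gram (set_row j r M)) = \det (gram (row' j M)) * sqnorm r.
Proof.
move=> rM0; set Y := set_row j r M.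
rewrite (expand_det_row _ j) (bigD1 j) //= big1 => [|i]; last first.
  have [a ->|->] := unliftP j i; last by rewrite eqxx.
  move=> _; have -> : gram Y j (lift j a) = (r *m (row' j M)^T) 0 a.
    rewrite !mxE; apply: eq_bigr => l _.
    by rewrite /Y !mxE eqxx eq_sym (negbTE (neq_lift j a)).
  by move/matrixP/(_ 0 a): rM0; rewrite !mxE => ->; rewrite mul0r.
rewrite addr0 mulrC /cofactor -signr_odd addnn odd_double expr0 mul1r.
congr (_ * _); last by rewrite /sqnorm !mxE; apply: eq_bigr => l _; rewrite /Y !mxE eqxx.
rewrite /gram row'Esub col'Esub -mulmx_colsub -mul_rowsub_mx -col'Esub -row'Esub.
by rewrite -tr_row' row'_set_row.
Qed.

Lemma det_gram_set_row_shift n (j : 'I_n.+1) (M : 'M[R]_(n.+1, d)) p (w : 'rV[R]_n) :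
  \det (gram (set_row j (p + w *m row' j M) M)) = \det (gram (set_row j p M)).
Proof.
set U := set_row j (delta_mx 0 j + w *m row' j 1%:M) 1%:M.
have -> : set_row j (p + w *m row' j M) M = U *m set_row j p M.
  rewrite mul_set_row mul1mx mulmxDl -rowE row_set_row eqxx -mulmxA -rowsubE.
  by rewrite -row'Esub row'_set_row set_set_row.
rewrite /gram trmx_mul mulmxA -(mulmxA U) !det_mulmx det_tr det_set_row_shear.
by rewrite mul1r mulr1.
Qed.

Lemma det_gram_set_row n (j : 'I_n.+1) (M : 'M[R]_(n.+1, d)) p :
  gram (row' j M) \in unitmx ->
  \det (gram (set_row j p M)) = \det (gram (row' j M)) * sqnorm (proj_perp (row' j M) p).
Proof.
set A := row' j M => unitA.
rewrite {1}(_ : p = proj_perp A p + perp_coef A p *m A); last by rewrite subrK.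
by rewrite det_gram_set_row_shift det_gram_set_row_orth ?proj_perp_orth.
Qed.

End Gram.

Section Exchange.
Variables (R : realFieldType) (d k : nat) (F : 'M[R]_(k, d) -> R) (a : R).
Variables (Q Q' : {pred 'rV[R]_d}).
Hypotheses (a_gt0 : 0 < a) (subQ : {subset Q' <= Q}).
Hypothesis exchange : forall M j, row j M \in Q -> 0 < F M ->
  exists2 q, q \in Q' & F M <= a * F (set_row j q M).

Lemma exchange_rows M : (forall i, row i M \in Q) -> 0 < F M ->
  exists M', [/\ forall i, row i M' \in Q', 0 < F M' & F M <= a ^+ k * F M'].
Proof.
suff exchange_from : forall t, (t <= k)%N -> forall M,
    (forall i, row i M \in Q) -> (forall i : 'I_k, (t <= i)%N -> row i M \in Q') ->
    0 < F M -> exists M', [/\ forall i, row i M' \in Q', 0 < F M' & F M <= a ^+ t * F M'].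
  by move=> MQ FM; apply: exchange_from => // i; rewrite leqNgt ltn_ord.
elim=> [_ {}M _ MQ' FM | t IH ltk {}M MQ MQ' FM].
  by exists M; split=> [i||]; rewrite ?MQ' ?expr0 ?mul1r.
set j := Ordinal ltk.
have [q qQ' FMq] := exchange (MQ j) FM.
have FMq_gt0 : 0 < F (set_row j q M).
  by rewrite -(pmulr_rgt0 _ a_gt0) (lt_le_trans FM FMq).
have [i|i ti|M' [M'Q' FM' le_FM']] := IH (ltnW ltk) (set_row j q M) _ _ FMq_gt0.
- by rewrite row_set_row; case: eqP => // _; apply: subQ.
- rewrite row_set_row; case: eqP => // /eqP ij; apply: MQ'.
  by rewrite ltn_neqAle ti andbT; apply: contra ij => /eqP tij; apply/eqP/val_inj.
exists M'; split => //.
by rewrite exprS -mulrA (le_trans FMq) // ler_pM2l.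
Qed.

End Exchange.

Section Height.
Variables (R : realType) (d : nat).

Lemma enorm_sqr (v : 'rV[R]_d) : enorm v ^+ 2 = sqnorm v.
Proof. by rewrite /enorm -sqnormE sqr_sqrtr // sqnorm_ge0. Qed.

Lemma dist_sub_proj_perp n (A : 'M[R]_(n, d)) p :
  gram A \in unitmx -> dist_sub p <<A>>%MS = enorm (proj_perp A p).
Proof.
move=> unitA; apply/le_anti/andP; split.
  apply: ge_inf; first by exists 0 => _ [q [_ ->]]; apply: sqrtr_ge0.
  by exists (perp_coef A p *m A); rewrite genmxE submxMl.
apply: lb_le_inf; first by exists (enorm (p - 0)), 0; rewrite sub0mx.
move=> _ [q [+ ->]]; rewrite genmxE => /submxP [D ->].
by rewrite /enorm -!sqnormE ler_sqrt ?sqnorm_ge0 ?sqnorm_proj_perp_min.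
Qed.

Lemma dist_sub_le_height (P : {fset 'rV[R]_d}) H p :
  p \in P -> dist_sub p H <= height P H.
Proof. by move=> pP; rewrite /height (bigD1 [` pP]%fset) //= le_max lexx. Qed.

Lemma height_witness (C : {fset 'rV[R]_d}) H :
  0 < height C H -> exists2 q, q \in C & height C H <= dist_sub q H.
Proof.
move=> hC_gt0.
suff [hC_le0|//] : height C H <= 0 \/ exists2 q, q \in C & height C H <= dist_sub q H.
  by move: hC_gt0; rewrite ltNge hC_le0.
rewrite /height.
apply: (big_ind (fun x => x <= 0 \/ exists2 q, q \in C & x <= dist_sub q H)).
- by left.
- by move=> x y hx hy; have [] := leP x y.
- by move=> x _; right; exists (val x); rewrite ?fsvalP.
Qed.

Lemma coreset_exchange (alpha : R) n (P C : {fset 'rV[R]_d}) (M : 'M[R]_(n.+1, d)) j :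
  0 < alpha -> coreset alpha n.+1 P C -> row j M \in P -> 0 < \det (gram M) ->
  exists2 q, q \in C & \det (gram M) <= alpha ^+ 2 * \det (gram (set_row j q M)).
Proof.
move=> alpha_gt0 [_ coreC] MjP detM_gt0.
set A := row' j M; set H := <<A>>%MS; set p := row j M.
have freeA : row_free A by apply/row'_free/row_free_gram/lt0r_neq0.
have unitA := gram_unit freeA.
have detME : \det (gram M) = \det (gram A) * sqnorm (proj_perp A p).
  by rewrite -{1}(set_row_id j M) det_gram_set_row.
have detA_ge0 : 0 <= \det (gram A).
  rewrite leNgt; apply/negP => /ltW/mulr_le0_ge0/(_ (sqnorm_ge0 (proj_perp A p))).
  by rewrite -detME leNgt detM_gt0.
have proj_gt0 : 0 < enorm (proj_perp A p).
  rewrite /enorm sqrtr_gt0 -sqnormE lt_def sqnorm_ge0 andbT.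
  by apply: contraTneq detM_gt0 => s0; rewrite detME s0 mulr0 ltxx.
have pH : enorm (proj_perp A p) <= height P H.
  by rewrite -dist_sub_proj_perp // dist_sub_le_height.
have PC : height P H <= alpha * height C H.
  by rewrite mulrC -ler_pdivrMr // coreC // genmxE; apply/eqP.
have [q qC Cq] : exists2 q, q \in C & height C H <= dist_sub q H.
  apply: height_witness; rewrite -(pmulr_rgt0 _ alpha_gt0).
  exact: lt_le_trans proj_gt0 (le_trans pH PC).
exists q => //; rewrite dist_sub_proj_perp // in Cq.
rewrite detME det_gram_set_row // mulrCA ler_wpM2l //.
rewrite -!enorm_sqr -exprMn lerXn2r ?nnegrE ?mulr_ge0 ?sqrtr_ge0 ?(ltW alpha_gt0) //.
by rewrite (le_trans pH) // (le_trans PC) // ler_pM2l.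
Qed.

End Height.

Section MaxDet.
Variables (R : realType) (d k : nat) (P : {fset 'rV[R]_d}).

Lemma row_ptmx (f : {ffun 'I_k -> P}) i : row i (ptmx f) = val (f i).
Proof. by apply/rowP => l; rewrite !mxE. Qed.

Lemma maxdet_ge0 : 0 <= maxdet k P.
Proof.
by rewrite /maxdet; elim/big_rec: _ => // f x _ x_ge0; rewrite le_max x_ge0 orbT.
Qed.

Lemma det_gram_le_maxdet (M : 'M[R]_(k, d)) :
  (forall i, row i M \in P) -> row_free M -> \det (gram M) <= maxdet k P.
Proof.
move=> MP freeM; pose f : {ffun 'I_k -> P} := [ffun i => [` MP i]%fset].
have fM : ptmx f = M by apply/matrixP => i l; rewrite mxE ffunE /= mxE.
rewrite /maxdet (bigD1 f) /=; first by rewrite fM le_max lexx.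
apply/injectiveP => a b /(congr1 val); rewrite !ffunE /=.
exact: row_free_row_inj freeM a b.
Qed.

Lemma maxdet_le x : 0 <= x ->
  (forall M : 'M[R]_(k, d), (forall i, row i M \in P) -> 0 < \det (gram M) ->
     \det (gram M) <= x) ->
  maxdet k P <= x.
Proof.
move=> x_ge0 bound; rewrite /maxdet.
apply: (big_ind (fun y => y <= x)) => // [y z|f _]; first by rewrite ge_max => -> ->.
have [|/le_trans] := ltP 0 (\det (gram (ptmx f))); last exact.
by apply: bound => i; rewrite row_ptmx fsvalP.
Qed.

End MaxDet.

Theorem lemma3p3 (R : realType) (d k m : nat) (alpha : R)
    (hk1 : (1 <= k)%N) (hkd : (k <= d)%N) (halpha : 1 <= alpha)
    (P c : 'I_m -> {fset 'rV[R]_d})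
    (hc : forall i : 'I_m, coreset alpha k (P i) (c i)) :
  maxdet k (\bigcup_(i <- enum 'I_m) P i)%fset
    <= alpha ^+ (2 * k) * maxdet k (\bigcup_(i <- enum 'I_m) c i)%fset.
Proof.
case: k hk1 hkd hc => [//|n] _ _ hc.
set UP := (\bigcup_(i <- _) P i)%fset; set Uc := (\bigcup_(i <- _) c i)%fset.
have alpha_gt0 : 0 < alpha := lt_le_trans ltr01 halpha.
have UcP : {subset Uc <= UP}.
  move=> q /bigfcupP [i iP qc]; apply/bigfcupP; exists i => //.
  exact: fsubsetP (hc i).1 q qc.
have exchange (M : 'M_(n.+1, d)) j : row j M \in UP -> 0 < \det (gram M) ->
    exists2 q, q \in Uc & \det (gram M) <= alpha ^+ 2 * \det (gram (set_row j q M)).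
  move=> /bigfcupP [i iP MjP] /(coreset_exchange alpha_gt0 (hc i) MjP) [q qc le].
  by exists q => //; apply/bigfcupP; exists i.
apply: maxdet_le => [|M MUP detM_gt0].
  by rewrite mulr_ge0 ?exprn_ge0 ?maxdet_ge0 ?(ltW alpha_gt0).
have [M' [M'Uc detM'_gt0 le]] :=
  exchange_rows (exprn_gt0 2 alpha_gt0) UcP exchange MUP detM_gt0.
rewrite (le_trans le) // exprM ler_wpM2l ?exprn_ge0 ?(ltW alpha_gt0) //.
exact: det_gram_le_maxdet M'Uc (row_free_gram (lt0r_neq0 detM'_gt0)).
Qed.
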